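(* Suppose that $\mathcal T$ is a projective Fraïssé family of rooted trees whose fixed epimorphisms are confluent and include all splitting edge maps. Then the projective Fraïssé limit of $\mathcal T$ has no isolated end vertices.
   Context: A graph is a pair $(V,E)$ with $E\subseteq V^2$ reflexive and symmetric; edges $\langle a,a\rangle$ are degenerate. A topological graph has a compact, zero-dimensional, second-countable vertex set and a closed edge set. Trees: finite graphs with unique simple paths between distinct vertices; rooted trees have a root $r$ and order $x\le y$ iff the path from $r$ to $y$ contains $x$; edges written $\langle a,b\rangle$ with $a<b$. Epimorphisms between rooted trees: vertex maps sending edges to edges, surjective on vertices and edges, root to root, order-preserving. Connected: not a union of two nonempty disjoint closed sets with no edges between. Confluent: for each closed connected $Q$ in the target every component $K$ of $f^{-1}(Q)$ has $f(K)=Q$. Splitting edge map $S\to T$: $V(S)=V(T)\cup\{x\}$, $x$ new, an edge $\langle a,b\rangle$ of $T$ replaced by $\langle a,x\rangle,\langle x,b\rangle$; identity on $T$, $x\mapsto a$ or $x\mapsto b$. A projective Fraïssé family of rooted trees: a class with a fixed class of epimorphisms, countably many isomorphism types, closed under composition with identities, with the joint projection property and amalgamation property. Its projective Fraïssé limit is the unique rooted topological graph $\mathbb F=\varprojlim\{F_n,\alpha_n\}$ (members of the family, fixed bonding maps, edges coordinatewise) such that every member is an image of $\mathbb F$ under an admissible epimorphism and for admissible $f\colon\mathbb F\to A$ and fixed $g\colon B\to A$ there is admissible $h$ with $f=g\circ h$, admissible meaning $h'\circ\alpha^\infty_m$ with $h'$ fixed. A subset $A$ (with induced edges) is an arc if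 it is connected and there are $a,b\in A$ such that removing any $x\in A\setminus\{a,b\}$ disconnects it. A vertex $v$ has order $\ge n$ if there are arcs $A_1,\dots,A_n$ pairwise intersecting in $\{v\}$; end vertices have order exactly $1$. An end vertex is isolated if it belongs to a non-degenerate edge. *)

From mathcomp Require Import all_boot.
Set Implicit Arguments. Unset Strict Implicit. Unset Printing Implicit Defensive.

Record rtree := RTree { rt_V : finType; rt_E : rel rt_V; rt_root : rt_V }.
Arguments rt_E : clear implicits.
Arguments rt_root : clear implicits.

Definition is_graph (T : rtree) := reflexive (rt_E T) /\ symmetric (rt_E T).

Definition sedge (T : rtree) : rel (rt_V T) := fun a b => (a != b) && rt_E T a b.

Definition spath (T : rtree) (x y : rt_V T) (p : seq (rt_V T)) : bool :=
  [&& path (@sedge T) x p, uniq (x :: p) & last x p == y].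

Definition is_rtree (T : rtree) :=
  is_graph T /\ forall x y : rt_V T, x != y -> exists! p, spath x y p.

Definition tle (T : rtree) (x y : rt_V T) :=
  exists p, spath (rt_root T) y p /\ x \in rt_root T :: p.

Definition is_epi (S T : rtree) (f : rt_V S -> rt_V T) :=
  [/\ (forall a b, rt_E S a b -> rt_E T (f a) (f b)),
      (forall c, exists a, f a = c),
      (forall c d, rt_E T c d -> exists a b, [/\ rt_E S a b, f a = c & f b = d]),
      f (rt_root S) = rt_root T &
      (forall x y, tle x y -> tle (f x) (f y))].

Definition rt_iso (S T : rtree) :=
  exists f : rt_V S -> rt_V T, [/\ bijective f,
    (forall a b, rt_E S a b = rt_E T (f a) (f b)) & f (rt_root S) = rt_root T].

(** connectedness of a subset of a finite tree (finite graphs carry the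
    discrete topology, so every subset is closed) *)
Definition fconnected (T : rtree) (Q : {set rt_V T}) :=
  ~ exists A B : {set rt_V T},
      [/\ A :|: B = Q, [disjoint A & B], A != set0, B != set0 &
          forall a b, a \in A -> b \in B -> ~~ rt_E T a b].

Definition fcomponent (T : rtree) (P K : {set rt_V T}) :=
  [/\ K \subset P, K != set0, fconnected K &
      forall L : {set rt_V T}, K \subset L -> L \subset P -> fconnected L -> L = K].

Definition confluent (S T : rtree) (f : rt_V S -> rt_V T) :=
  forall Q : {set rt_V T}, fconnected Q ->
    forall K, fcomponent (f @^-1: Q) K -> f @: K = Q.

(** T is embedded in S
    by i, V(S) = i(V(T)) ∪ {x}, edge <a,b> replaced by <a,x>, <x,b>. *)
Definition is_split (S T : rtree) (s : rt_V S -> rt_V T) (a b c : rt_V T) :=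
  [/\ a != b, rt_E T a b, tle a b, (c = a \/ c = b) &
    exists (x : rt_V S) (i : rt_V T -> rt_V S),
      injective i /\
      (forall y, y = x \/ exists u, i u = y) /\
      (forall u, i u <> x) /\
      rt_root S = i (rt_root T) /\
      (forall u v, rt_E S (i u) (i v) <->
           rt_E T u v /\ ~ ((u = a /\ v = b) \/ (u = b /\ v = a))) /\
      (forall u, rt_E S x (i u) <-> (u = a \/ u = b)) /\
      (forall u, rt_E S (i u) x <-> (u = a \/ u = b)) /\
      rt_E S x x /\
      (forall u, s (i u) = u) /\
      s x = c].

Definition fixed_maps := forall S T : rtree, (rt_V S -> rt_V T) -> Prop.

Definition proj_fraisse_family (Fam : rtree -> Prop) (Fix : fixed_maps) :=
  (forall T, Fam T -> is_rtree T) /\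
  (forall S T f, Fix S T f -> [/\ Fam S, Fam T & is_epi f]) /\
  (exists Ts : nat -> rtree, (forall n, Fam (Ts n)) /\
      forall T, Fam T -> exists n, rt_iso T (Ts n)) /\
  (forall T, Fam T -> Fix T T id) /\
  (forall R S T (f : rt_V S -> rt_V T) (g : rt_V R -> rt_V S),
      Fix S T f -> Fix R S g -> Fix R T (f \o g)) /\
  (forall A B, Fam A -> Fam B ->
      exists C (f : rt_V C -> rt_V A) (g : rt_V C -> rt_V B),
        [/\ Fam C, Fix C A f & Fix C B g]) /\
  (forall A B C (f : rt_V B -> rt_V A) (g : rt_V C -> rt_V A),
      Fix B A f -> Fix C A g ->
      exists D (f' : rt_V D -> rt_V B) (g' : rt_V D -> rt_V C),
        [/\ Fam D, Fix D B f', Fix D C g' & forall x, f (f' x) = g (g' x)]).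

Definition LV (F : nat -> rtree) := forall n, rt_V (F n).

Definition inlim (F : nat -> rtree) (alpha : forall n, rt_V (F n.+1) -> rt_V (F n))
  (x : LV F) := forall n, alpha n (x n.+1) = x n.

Definition limE (F : nat -> rtree) (x y : LV F) := forall n, rt_E (F n) (x n) (y n).

(** A is relatively closed in Q (product topology of the discrete F n) *)
Definition relclosed (F : nat -> rtree) (Q A : LV F -> Prop) :=
  forall x, Q x -> (forall n, exists y, A y /\ forall m, m <= n -> y m = x m) -> A x.

Definition lconnected (F : nat -> rtree) (Q : LV F -> Prop) :=
  ~ exists A B : LV F -> Prop,
      (forall x, Q x <-> A x \/ B x) /\ (forall x, ~ (A x /\ B x)) /\
      (exists a, A a) /\ (exists b, B b) /\
      relclosed Q A /\ relclosed Q B /\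
      (forall a b, A a -> B b -> ~ limE a b).

Definition is_arc (F : nat -> rtree) (Q : LV F -> Prop) :=
  lconnected Q /\
  exists a b, [/\ Q a, Q b, a <> b &
    forall x, Q x -> x <> a -> x <> b -> ~ lconnected (fun y => Q y /\ y <> x)].

Definition order_ge (F : nat -> rtree) (alpha : forall n, rt_V (F n.+1) -> rt_V (F n))
  (v : LV F) (n : nat) :=
  exists A : nat -> (LV F -> Prop), forall i, i < n ->
    [/\ (forall x, A i x -> inlim alpha x), is_arc (A i), A i v &
        forall j, j < n -> i <> j -> forall x, A i x -> A j x -> x = v].

Definition end_vertex (F : nat -> rtree) (alpha : forall n, rt_V (F n.+1) -> rt_V (F n))
  (v : LV F) := [/\ inlim alpha v, order_ge alpha v 1 & ~ order_ge alpha v 2].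

Definition isolated_end_vertex (F : nat -> rtree)
  (alpha : forall n, rt_V (F n.+1) -> rt_V (F n)) (v : LV F) :=
  end_vertex alpha v /\ exists w, [/\ inlim alpha w, w <> v & limE v w].

Definition admissible (Fix : fixed_maps) (F : nat -> rtree)
  (alpha : forall n, rt_V (F n.+1) -> rt_V (F n)) (A : rtree) (h : LV F -> rt_V A) :=
  exists m (h' : rt_V (F m) -> rt_V A),
    Fix (F m) A h' /\ forall x, inlim alpha x -> h x = h' (x m).

Definition is_proj_fraisse_limit (Fam : rtree -> Prop) (Fix : fixed_maps)
  (F : nat -> rtree) (alpha : forall n, rt_V (F n.+1) -> rt_V (F n)) :=
  [/\ (forall n, Fam (F n)),
      (forall n, Fix (F n.+1) (F n) (alpha n)),
      (forall A, Fam A -> exists h : LV F -> rt_V A, admissible Fix alpha h) &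
      (forall A B (f : LV F -> rt_V A) (g : rt_V B -> rt_V A),
          admissible Fix alpha f -> Fix B A g ->
          exists h : LV F -> rt_V B, admissible Fix alpha h /\
            forall x, inlim alpha x -> f x = g (h x))].

From mathcomp Require Import all_boot boolp.
Set Implicit Arguments. Unset Strict Implicit. Unset Printing Implicit Defensive.

(** Let the thread v be an end vertex joined by an edge to a thread w <> v, and
    let m be a level where they differ.  The tree orders of the F n pass to
    threads, and for threads a < b the segment {z | a <= z <= b} is an arc
    (König's lemma supplies its points), so it suffices to find threads
    a < v < b: the arcs [a, v] and [v, b] meet only in v.

    Split the edge {v_m, w_m} of F m, with the new vertex over v_m, and factor
    the projection to level m through the splitting map: the lift sends v to
    the new vertex.  That vertex is not the root, so if v_m < w_m the root
    thread lies strictly below v, and w above it.  If w_m < v_m, then w lies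
    below v and the new vertex has a child; by confluence, at every level the
    component of v_n in the preimage of the subtree above the new vertex lies
    above v_n and maps onto that subtree, and König's lemma assembles preimages
    of the child into a thread strictly above v. *)

Section RootedTree.
Variable T : rtree.
Hypothesis HT : is_rtree T.
Local Notation V := (rt_V T).
Local Notation r := (rt_root T).
Local Notation E := (rt_E T).
Implicit Types x y z : V.

Lemma edge_refl x : E x x.
Proof. by case: HT => [[]]. Qed.

Lemma edge_sym x y : E x y = E y x.
Proof. by case: HT => [[_ ]]. Qed.

Lemma spath_root_nil p : spath r r p -> p = [::].
Proof.
case: p => // y p /and3P[_ + /eqP Hl].
by rewrite cons_uniq -{1}Hl /= mem_last.
Qed.

Lemma spath_root_uniq y p q : spath r y p -> spath r y q -> p = q.
Proof.
case: (eqVneq r y) => [<- /spath_root_nil -> /spath_root_nil -> //|ne Hp Hq].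
by case: HT => _ /(_ _ _ ne) [p0 [_ Hu]]; rewrite -(Hu _ Hp) -(Hu _ Hq).
Qed.

Lemma spath_root_exists y : exists p, spath r y p.
Proof.
case: (eqVneq r y) => [<-|ne]; first by exists [::]; rewrite /spath /= eqxx.
by case: HT => _ /(_ _ _ ne) [p []]; exists p.
Qed.

Definition rpath y := xchoose (spath_root_exists y).

Lemma rpathP y : spath r y (rpath y).
Proof. exact: xchooseP. Qed.

Definition tleb x y := x \in r :: rpath y.

Lemma tleP x y : reflect (tle x y) (tleb x y).
Proof.
apply: (iffP idP) => [Hx|[p [Hp Hx]]]; first by exists (rpath y); split => //; exact: rpathP.
by rewrite /tleb -(spath_root_uniq Hp (rpathP y)).
Qed.

Lemma tle_refl x : tle x x.
Proof. by apply/tleP; case/and3P: (rpathP x) => _ _ /eqP Hl; rewrite /tleb -{1}Hl mem_last. Qed.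

Definition par y := last r (belast r (rpath y)).

Lemma par_root : par r = r.
Proof. by rewrite /par (spath_root_nil (rpathP r)). Qed.

Lemma par_spec y : y != r -> rpath y = rcons (rpath (par y)) y /\ sedge (par y) y.
Proof.
move=> ne; rewrite /par.
case/lastP: (rpath y) (rpathP y) => [|q z] /and3P[Hp Hu /eqP Hl].
  by move: ne; rewrite -Hl eqxx.
rewrite last_rcons in Hl; subst z; rewrite belast_rcons /=.
move: Hp Hu; rewrite rcons_path -rcons_cons rcons_uniq => /andP[Hq He] /andP[_ Hq'].
have Hs : spath r (last r q) q by apply/and3P.
by rewrite -(spath_root_uniq Hs (rpathP _)) He.
Qed.

Lemma tle_par x y : tle x y <-> x = y \/ (y != r /\ tle x (par y)).
Proof.
case: (eqVneq y r) => [->|ne].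
  split => [/tleP|[->|[/negP + _]]] //; last exact: tle_refl.
  by rewrite /tleb (spath_root_nil (rpathP r)) inE => /eqP; left.
have Hr z : tleb z y = (z == y) || tleb z (par y).
  by rewrite /tleb (proj1 (par_spec ne)) -rcons_cons mem_rcons inE.
split => [/tleP|]; first by rewrite Hr => /orP[/eqP|/tleP]; auto.
case=> [->|[_ /tleP Hx]]; first exact: tle_refl.
by apply/tleP; rewrite Hr Hx orbT.
Qed.

Lemma tle_par_neq x z : tle x z -> z != x -> tle x (par z).
Proof. by case/tle_par => [->|[]]; rewrite ?eqxx. Qed.

Lemma tle_root_eq x : tle x r -> x = r.
Proof. by case/tle_par => [//|[]]; rewrite eqxx. Qed.

Definition depth y := size (rpath y).

Lemma depth_par y : y != r -> depth (par y) < depth y.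
Proof. by move=> ne; rewrite /depth (proj1 (par_spec ne)) size_rcons. Qed.

Lemma par_ind (P : V -> Prop) :
  P r -> (forall y, y != r -> P (par y) -> P y) -> forall y, P y.
Proof.
move=> Pr IH y; elim: {y}(depth y).+1 {-2}y (ltnSn (depth y)) => // n IHn y Hy.
case: (eqVneq y r) => [-> //|ne]; apply: (IH _ ne) (IHn _ _).
by rewrite ltnS in Hy; exact: leq_trans (depth_par ne) Hy.
Qed.

Lemma tle_root y : tle r y.
Proof. by elim/par_ind: y => [|y ne IH]; [exact: tle_refl|apply/tle_par; right]. Qed.

Lemma tle_trans x y z : tle x y -> tle y z -> tle x z.
Proof.
move=> Hxy; elim/par_ind: z => [|z ne IH] /tle_par.
  by case=> [<- //|[]]; rewrite eqxx.
by case=> [<- //|[_ /IH Hx]]; apply/tle_par; right.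
Qed.

Lemma tle_depth x y : tle x y -> x = y \/ depth x < depth y.
Proof.
elim/par_ind: y => [|y ne IH] /tle_par; first by case=> [|[]]; [left|rewrite eqxx].
case=> [|[_ /IH [->|H]]]; [by left| |]; right; first exact: depth_par.
exact: ltn_trans H (depth_par ne).
Qed.

Lemma tle_anti x y : tle x y -> tle y x -> x = y.
Proof.
move=> /tle_depth[// |Hxy] /tle_depth[// |Hyx].
by have := ltn_trans Hxy Hyx; rewrite ltnn.
Qed.

Lemma tle_par_self y : tle (par y) y.
Proof.
case: (eqVneq y r) => [->|ne]; first by rewrite par_root; exact: tle_refl.
by apply/tle_par; right; split => //; exact: tle_refl.
Qed.

Lemma tle_total x y b : tle x b -> tle y b -> tle x y \/ tle y x.
Proof.
elim/par_ind: b x y => [|b ne IH] x y Hx Hy.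
  by rewrite (tle_root_eq Hx) (tle_root_eq Hy); left; exact: tle_refl.
case/tle_par: Hx => [->|[_ Hx]]; first by right.
case/tle_par: Hy => [->|[_ Hy]]; last exact: IH.
by left; exact: tle_trans Hx (tle_par_self b).
Qed.

Lemma edge_par y : E (par y) y.
Proof.
case: (eqVneq y r) => [->|ne]; first by rewrite par_root edge_refl.
by case/andP: (proj2 (par_spec ne)).
Qed.

Lemma edge_nle_par y z : E y z -> ~ tle y z -> z = par y.
Proof.
move=> Hyz Hnle.
have ne : z != y by apply: contra_notN Hnle => /eqP ->; exact: tle_refl.
have Hs : spath r y (rcons (rpath z) y).
  case/and3P: (rpathP z) => Hp Hu /eqP Hl.
  rewrite /spath -rcons_cons rcons_uniq Hu rcons_path Hp /sedge Hl ne edge_sym Hyz.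
  by rewrite last_rcons eqxx !andbT; apply/negP => H; apply: Hnle; exact/tleP.
rewrite /par -(spath_root_uniq Hs (rpathP y)) belast_rcons /=.
by case/and3P: (rpathP z) => _ _ /eqP.
Qed.

Lemma edge_tle_par y z : E y z -> tle y z \/ z = par y.
Proof. by move=> Hyz; case: (lem (tle y z)) => H; [left|right; exact: edge_nle_par]. Qed.

Lemma edge_tle x y : E x y -> tle x y \/ tle y x.
Proof. by case/edge_tle_par => [|->]; [left|right; exact: tle_par_self]. Qed.

Lemma tle_between_nedge x y z : tle x y -> tle y z -> x <> y -> y <> z -> ~ E x z.
Proof.
move=> Hxy Hyz nxy nyz; rewrite edge_sym => /edge_tle_par[Hzx|Hx].
  exact: nyz (tle_anti Hyz (tle_trans Hzx Hxy)).
case/tle_par: Hyz => [//|[_ Hyx]].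
by apply: nxy; rewrite Hx in Hxy *; exact: tle_anti Hxy Hyx.
Qed.

Lemma edge_up_cross v z1 z2 : E z1 z2 -> tle v z1 -> ~ tle v z2 -> z1 = v /\ z2 = par v.
Proof.
move=> /edge_tle_par[Hz Hv1 Hv2|-> Hv1 Hv2]; first by case: Hv2; exact: tle_trans Hv1 Hz.
by case/tle_par: Hv1 => [->|[_ //]].
Qed.

Definition induced (Q : {set V}) : rel V := [rel a b | [&& a \in Q, b \in Q & E a b]].

Lemma fconnected_connect (Q : {set V}) v :
  (forall z, z \in Q -> connect (induced Q) v z) -> fconnected Q.
Proof.
move=> Hconn [A [B [HU Hdis /set0Pn[a Ha] /set0Pn[b Hb] HAB]]].
have HQ z : (z \in Q) = (z \in A) || (z \in B) by rewrite -HU inE.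
have Hcl : closed (induced Q) (mem A).
  move=> x y /and3P[Hx Hy Hxy]; apply/idP/idP => [HxA|HyA].
    by move: Hy; rewrite HQ => /orP[// |/(HAB _ _ HxA)]; rewrite Hxy.
  by move: Hx; rewrite HQ => /orP[// |/(HAB _ _ HyA)]; rewrite edge_sym Hxy.
have side z : z \in Q -> (z \in A) = (v \in A).
  by move=> Hz; rewrite (closed_connect Hcl (Hconn z Hz)).
have HbA : b \in A.
  by rewrite (side b); [rewrite -(side a) // HQ Ha|rewrite HQ Hb orbT].
by rewrite (disjointFr Hdis HbA) in Hb.
Qed.

Lemma fconnected_crossing (Q : {set V}) (X Y : V -> Prop) a b :
  fconnected Q -> (forall z, z \in Q -> X z \/ Y z) ->
  a \in Q -> X a -> b \in Q -> Y b ->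
  exists u w, [/\ u \in Q, w \in Q, X u, Y w & E u w].
Proof.
move=> HQ Hcov Ha HXa Hb HYb; apply: contrapT => Hno.
have [[z Hz [HXz HYz]]|Hboth] := lem (exists2 z, z \in Q & X z /\ Y z).
  by apply: Hno; exists z, z; split => //; exact: edge_refl.
apply: HQ; exists [set z in Q | `[< X z >]], [set z in Q | ~~ `[< X z >]]; split.
- by apply/setP => z; rewrite !inE; case: (z \in Q); case: `[< X z >].
- by apply/pred0P => z /=; rewrite !inE; case: (z \in Q); case: `[< X z >].
- by apply/set0Pn; exists a; rewrite inE Ha; exact/asboolP.
- apply/set0Pn; exists b; rewrite inE Hb; apply/asboolPn => HXb.
  by apply: Hboth; exists b.
- move=> u w; rewrite !inE => /andP[Hu /asboolP HXu] /andP[Hw /asboolPn HXw].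
  apply/negP => Huw; apply: Hno; exists u, w; split => //.
  by case: (Hcov w Hw).
Qed.

Lemma fconnected_down_closed (Q : {set V}) x : x \in Q ->
  (forall z, z \in Q -> tle x z) -> (forall z, z \in Q -> z != x -> par z \in Q) ->
  fconnected Q.
Proof.
move=> HxQ Hle Hpar; apply: (@fconnected_connect _ x) => z.
elim/par_ind: z => [|z ne IH] Hz.
  by rewrite (tle_root_eq (Hle _ Hz)); exact: connect0.
case: (eqVneq z x) => [->|nzx]; first exact: connect0.
apply: connect_trans (IH (Hpar _ Hz nzx)) (connect1 _).
by apply/and3P; split; [exact: Hpar|exact: Hz|exact: edge_par].
Qed.

Definition upset x : {set V} := [set y | tleb x y].
Definition between x z : {set V} := [set y | tleb x y && tleb y z].

Lemma in_upset x y : reflect (tle x y) (y \in upset x).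
Proof. by rewrite inE; exact: tleP. Qed.

Lemma in_between x y z : reflect (tle x y /\ tle y z) (y \in between x z).
Proof. by rewrite inE; apply: (iffP andP) => -[/tleP ? /tleP ?]. Qed.

Lemma upset_fconnected x : fconnected (upset x).
Proof.
apply: (fconnected_down_closed (x := x)); first exact/in_upset/tle_refl.
  by move=> z /in_upset.
by move=> z /in_upset Hz nzx; apply/in_upset; exact: tle_par_neq.
Qed.

Lemma between_fconnected x y : tle x y -> fconnected (between x y).
Proof.
move=> Hxy; apply: (fconnected_down_closed (x := x)).
- by apply/in_between; split => //; exact: tle_refl.
- by move=> z /in_between[].
move=> z /in_between[Hxz Hzy] nzx; apply/in_between; split; first exact: tle_par_neq.
exact: tle_trans (tle_par_self z) Hzy.
Qed.

Lemma component_exists (P : {set V}) v : v \in P -> exists2 K, fcomponent P K & v \in K.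
Proof.
move=> Hv; pose K := [set z | connect (induced P) v z].
have HvK : v \in K by rewrite inE connect0.
have HKP : K \subset P.
  apply/subsetP => z; rewrite inE => /connectP[p + ->].
  by case/lastP: p => [|q y] //; rewrite rcons_path last_rcons => /andP[_ /and3P[]].
exists K => //; split => //; first by apply/set0Pn; exists v.
  apply: (@fconnected_connect _ v) => z; rewrite inE => /connectP[p Hp ->].
  have HpK : all (fun y => y \in K) (v :: p).
    by apply/allP => y /(path_connect Hp); rewrite inE.
  apply/connectP; exists p => //; apply: (sub_in_path _ HpK Hp).
  by move=> a b Ha Hb /and3P[_ _ Hab]; apply/and3P.
move=> L HKL HLP HL; apply/eqP; rewrite eqEsubset HKL andbT.
apply/subsetP => z HzL; apply: contrapT => HzK.
have [|u [w [Hu Hw HuK HwK Huw]]] := @fconnected_crossing L (fun y => y \in K)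
  (fun y => y \notin K) v z HL _ (subsetP HKL _ HvK) HvK HzL (introT negP HzK).
  by move=> y _; case: (y \in K); [left|right].
apply: (negP HwK); move: HuK; rewrite !inE => Hvu; apply: connect_trans Hvu (connect1 _).
by apply/and3P; split; rewrite ?(subsetP HLP).
Qed.

Lemma component_above (K : {set V}) v : fconnected K -> v \in K -> par v \notin K ->
  forall y, y \in K -> tle v y.
Proof.
move=> HK Hv Hp y Hy; apply: contrapT => Hny.
have [|u [w [_ Hw Hvu Hvw Huw]]] := @fconnected_crossing K (tle v) (fun z => ~ tle v z)
  v y HK _ Hv (tle_refl v) Hy Hny.
  by move=> z _; exact: lem.
by case: (edge_up_cross Huw Hvu Hvw) => _ Hwp; rewrite -Hwp Hw in Hp.
Qed.

End RootedTree.

Section TreeMap.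
Variables (S T : rtree) (f : rt_V S -> rt_V T).
Hypothesis Hf : is_epi f.

Lemma epi_edge a b : rt_E S a b -> rt_E T (f a) (f b).
Proof. by case: Hf => H _ _ _ _; exact: H. Qed.

Lemma epi_tle a b : tle a b -> tle (f a) (f b).
Proof. by case: Hf => _ _ _ _ H; exact: H. Qed.

Lemma epi_root : f (rt_root S) = rt_root T.
Proof. by case: Hf. Qed.

Hypotheses (HS : is_rtree S) (HT : is_rtree T).

Lemma epi_lift_between a b y : tle a b -> tle (f a) y -> tle y (f b) ->
  exists z, [/\ tle a z, tle z b & f z = y].
Proof.
move=> Hab Hay Hyb.
have [Hfa|Hfa] := lem (f a = y); first by exists a; split => //; exact: tle_refl.
have Ha : a \in between HS a b by apply/in_between; split => //; exact: tle_refl.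
have Hb : b \in between HS a b by apply/in_between; split => //; exact: tle_refl.
have [||u [w [Hu _ Hyu Hyw Huw]]] := @fconnected_crossing _ HS _ (fun z => tle y (f z))
  (fun z => ~ tle y (f z)) b a (between_fconnected Hab) _ Hb Hyb Ha.
- by move=> z _; exact: lem.
- by move=> Hya; apply: Hfa; exact: (tle_anti HT Hay Hya).
case: (edge_up_cross HT (epi_edge Huw) Hyu Hyw) => Hfu _.
by case/(in_between HS): Hu => Hau Hub; exists u.
Qed.

Lemma confluent_lift_above t y : confluent f ->
  ~ tle (f t) (f (par HS t)) -> tle (f t) y -> exists z, tle t z /\ f z = y.
Proof.
move=> Hc Hnp Hty.
have Ht : t \in f @^-1: upset HT (f t) by rewrite inE; exact/in_upset/tle_refl.
have [K HK HtK] := component_exists HS Ht.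
have : y \in f @: K by rewrite (Hc _ (@upset_fconnected _ HT (f t)) _ HK); exact/in_upset.
case/imsetP => z HzK ->; exists z; split => //.
case: HK => HKP _ HKc _; apply: (@component_above _ HS _ _ HKc HtK _ _ HzK).
by apply/negP => /(subsetP HKP); rewrite inE => /in_upset.
Qed.

End TreeMap.

Lemma fin_antitone_choice (X : finType) (Q : X -> nat -> Prop) :
  (forall y M N, M <= N -> Q y N -> Q y M) -> (forall M, exists y, Q y M) ->
  exists y, forall M, Q y M.
Proof.
move=> Hanti Hall; apply: contrapT => /forallNP Hno.
have [bad Hbad] : {bad : X -> nat & forall y, ~ Q y (bad y)}.
  by apply: (@choice _ _ (fun y M => ~ Q y M)) => y; apply/existsNP; exact: Hno.
have [y Hy] := Hall (\max_(y : X) bad y).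
exact: Hbad y (Hanti y _ _ (leq_bigmax y) Hy).
Qed.

Section Konig.
Variables (G : nat -> finType) (beta : forall n, G n.+1 -> G n).

Definition thread (u : forall n, G n) := forall n, beta (u n.+1) = u n.

Definition thread_upto j (t : forall n, G n) := forall l, l < j -> beta (t l.+1) = t l.

Lemma thread_upto_le j k t : thread_upto j t -> k <= j -> thread_upto k t.
Proof. by move=> Ht Hkj l Hl; apply: Ht; exact: leq_trans Hl Hkj. Qed.

Lemma thread_upto_extend j t (z : G j.+1) :
  thread_upto j t -> beta z = t j -> thread_upto j.+1 (dfwith t z).
Proof.
move=> Ht Hz l; rewrite ltnS leq_eqVlt => /orP[/eqP->|Hl].
  by rewrite dfwith_in dfwith_out // gtn_eqF.
by rewrite !dfwith_out ?Ht // gtn_eqF // ltnS ltnW.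
Qed.

Fixpoint bond d n : G (d + n) -> G n :=
  match d return G (d + n) -> G n with
  | 0 => id
  | d'.+1 => fun z => @bond d' n (beta z)
  end.
Arguments bond : clear implicits.

Lemma thread_upto_bond d n t : thread_upto (d + n) t -> t n = bond d n (t (d + n)).
Proof.
elim: d => [|d IH] // Ht /=.
rewrite (Ht (d + n)) ?addSn ?ltnS ?leqnn //.
by apply: IH; apply: thread_upto_le Ht _; rewrite leq_add2r.
Qed.

Lemma thread_bond d n u : thread u -> u n = bond d n (u (d + n)).
Proof. by move=> Hu; apply: thread_upto_bond => l _; exact: Hu. Qed.

Section Extension.
Variable P : forall n, G n -> Prop.
Hypothesis P_beta : forall n (y : G n.+1), P y -> P (beta y).
Hypothesis P_inhabited : forall n, exists y : G n, P y.

Lemma thread_upto_through M (z : G M) : exists t, thread_upto M t /\ t M = z.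
Proof.
elim: M z => [|M IH] z.
  by exists (dfwith (fun n => sval (cid (P_inhabited n))) z); rewrite dfwith_in.
have [t [Ht Htz]] := IH (beta z).
by exists (dfwith t z); rewrite dfwith_in; split => //; exact: thread_upto_extend.
Qed.

Lemma thread_upto_P M t : thread_upto M t -> P (t M) -> forall l, l <= M -> P (t l).
Proof.
move=> Ht HP l Hl.
have down d : d + l <= M -> P (t (d + l)) -> P (t l).
  by elim: d => [//|d IH] Hd Hp; apply: IH (ltnW Hd) _; rewrite -(Ht _ Hd); exact: P_beta.
by apply: (down (M - l)); rewrite subnK.
Qed.

Definition extendable n (y : G n) M :=
  exists t, [/\ thread_upto (M + n) t, P (t (M + n)) & t n = y].

Lemma extendable_antitone n (y : G n) M N : M <= N -> extendable y N -> extendable y M.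
Proof.
move=> HMN [t [Ht HP Hty]]; exists t; split => //.
  by apply: thread_upto_le Ht _; rewrite leq_add2r.
by apply: (thread_upto_P Ht HP); rewrite leq_add2r.
Qed.

Lemma extendable_exists n : exists y : G n, forall M, extendable y M.
Proof.
apply: fin_antitone_choice => [y M N|M]; first exact: extendable_antitone.
have [z Hz] := P_inhabited (M + n).
have [t [Ht Htz]] := thread_upto_through z.
by exists (t n), t; rewrite Htz.
Qed.

Lemma extendable_succ n (y : G n) : (forall M, extendable y M) ->
  exists y' : G n.+1, beta y' = y /\ forall M, extendable y' M.
Proof.
move=> Hy.
have [|y' Hy'] := @fin_antitone_choice _ (fun y' M => beta y' = y /\ extendable y' M)
  (fun y' M N HMN '(conj Hb He) => conj Hb (extendable_antitone HMN He)).
  move=> M; have [t [Ht HP Hty]] := Hy M.+1.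
  exists (t n.+1); split; first by rewrite (Ht n) // addSn ltnS leq_addl.
  by exists t; rewrite addnS -addSn.
by exists y'; split => [|M]; [case: (Hy' 0)|case: (Hy' M)].
Qed.

Fixpoint konig_seq n : {y : G n | forall M, extendable y M} :=
  match n return {y : G n | forall M, extendable y M} with
  | 0 => cid (extendable_exists 0)
  | n'.+1 => let c := cid (extendable_succ (svalP (konig_seq n'))) in
             exist _ (sval c) (proj2 (svalP c))
  end.

Lemma konig : exists u, thread u /\ forall n, P (u n).
Proof.
exists (fun n => sval (konig_seq n)); split => n.
  exact: proj1 (svalP (cid (extendable_succ (svalP (konig_seq n))))).
by have [t [_ HP <-]] := svalP (konig_seq n) 0.
Qed.

End Extension.

Lemma konig_through k (Phi : G k -> Prop) (P : forall n, G n -> Prop) :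
  (forall n (y : G n.+1), P _ y -> P _ (beta y)) -> (forall n, exists y : G n, P _ y) ->
  (forall d, exists2 z : G (d + k), P _ z & Phi (bond d k z)) ->
  exists u, [/\ thread u, forall n, P _ (u n) & Phi (u k)].
Proof.
move=> P_beta P_inh Hthrough.
(* [Q j z]: every partial thread ending in [z] meets [Phi] at level [k]; unlike
   [Phi], this makes sense at every level and is preserved by [beta]. *)
pose Q j (z : G j) := P _ z /\ (k <= j -> forall t, thread_upto j t -> t j = z -> Phi (t k)).
have [||u [Hu HQ]] := @konig Q.
- move=> j z [Hz Hphi]; split => [|Hkj t Ht Htz]; first exact: P_beta.
  have := Hphi (leq_trans Hkj (leqnSn j)) _ (thread_upto_extend Ht (esym Htz)).
  by rewrite dfwith_in dfwith_out ?gtn_eqF ?ltnS //; apply.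
- move=> j; case: (ltnP j k) => Hj.
    by have [y Hy] := P_inh j; exists y; split => // Hkj; rewrite leqNgt Hj in Hkj.
  rewrite -(subnK Hj); have [z Hz Hphi] := Hthrough (j - k).
  by exists z; split => // _ t Ht Htz; rewrite (thread_upto_bond Ht) Htz.
exists u; split => [//|n|]; first by case: (HQ n).
by case: (HQ k) => _; apply => //; apply: thread_upto_le (fun l _ => Hu l) (leqnn k).
Qed.

End Konig.
Arguments bond {G} beta d n.

Lemma split_new_vertex (S T : rtree) (s : rt_V S -> rt_V T) a b c y y' :
  is_split s a b c -> rt_E S y y' -> s y = c -> s y' = a \/ s y' = b -> s y' <> c ->
  y != rt_root S /\ exists2 z, rt_E S y z & z \notin [:: y; y'].
Proof.
case=> _ _ _ Hc [x [i [Hinj [Hcov [Hix [Hroot [HEi [HExi [_ [_ [Hsi Hsx]]]]]]]]]]].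
move=> Hyy' Hsy Hsy' Hne.
have Hy' : y' = i (s y').
  by case: (Hcov y') => [Hx|[u <-]]; [case: Hne; rewrite Hx Hsx|rewrite Hsi].
have Hy : y = x.
  case: (Hcov y) => [//|[u Hu]]; exfalso.
  have Huc : u = c by rewrite -Hsy -Hu Hsi.
  move: Hyy'; rewrite -Hu Huc Hy' => /HEi[_]; apply.
  by move: Hne; case: Hc => ->; case: Hsy' => -> Hne; by [left|right|case: Hne].
subst y; split; first by apply/eqP => Hxr; apply: (Hix (rt_root T)); rewrite -Hroot.
exists (i c); first exact/HExi.
rewrite !inE negb_or; apply/andP; split; apply/eqP; first exact: Hix.
by rewrite Hy' => /Hinj Hcs; exact: Hne (esym Hcs).
Qed.

Section InverseLimit.
Variable F : nat -> rtree.
Local Unset Implicit Arguments.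
Variable alpha : forall n, rt_V (F n.+1) -> rt_V (F n).
Local Set Implicit Arguments.
Hypothesis HF : forall n, is_rtree (F n).
Hypothesis Hepi : forall n, is_epi (alpha n).
Implicit Types a b v w x y z : LV F.

Lemma thread_tle_down x y n l : inlim alpha x -> inlim alpha y ->
  tle (x n) (y n) -> l <= n -> tle (x l) (y l).
Proof.
move=> Hx Hy H Hl; rewrite -(subnK Hl) in H.
elim: (n - l) H => [//|d IH] H; apply: IH.
by have := epi_tle (Hepi _) H; rewrite Hx Hy.
Qed.

Lemma thread_eq_down x y n l : inlim alpha x -> inlim alpha y ->
  x n = y n -> l <= n -> x l = y l.
Proof.
move=> Hx Hy H Hl; rewrite -(subnK Hl) in H.
by elim: (n - l) H => [//|d IH] H; apply: IH; rewrite -Hx -Hy H.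
Qed.

Lemma thread_neq_up x y n l : inlim alpha x -> inlim alpha y ->
  x l <> y l -> l <= n -> x n <> y n.
Proof. by move=> Hx Hy H Hl e; apply: H; exact: thread_eq_down Hx Hy e Hl. Qed.

Lemma neq_level x y : x <> y -> exists n, x n <> y n.
Proof.
move=> ne; apply: contrapT => /forallNP H; apply: ne.
by apply: functional_extensionality_dep => n; apply: contrapT; exact: H.
Qed.

Definition lle x y := forall n, tle (x n) (y n).

Lemma lle_refl x : lle x x.
Proof. by move=> n; exact: tle_refl. Qed.

Lemma lle_anti x y : lle x y -> lle y x -> x = y.
Proof.
by move=> Hxy Hyx; apply: functional_extensionality_dep => n; exact: tle_anti (Hxy n) (Hyx n).
Qed.

Lemma lle_total x y b : inlim alpha x -> inlim alpha y -> lle x b -> lle y b ->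
  lle x y \/ lle y x.
Proof.
move=> Hx Hy Hxb Hyb; have [|Hnxy] := lem (lle x y); [by left|right].
have [n0 Hn0] : exists n0, ~ tle (x n0) (y n0) by apply/existsNP.
move=> n; case: (tle_total (HF _) (Hxb (maxn n n0)) (Hyb (maxn n n0))) => H.
  by case: Hn0; exact: thread_tle_down Hx Hy H (leq_maxr n n0).
exact: thread_tle_down Hy Hx H (leq_maxl n n0).
Qed.

Lemma edge_lle x y m : inlim alpha x -> inlim alpha y -> limE x y ->
  x m <> y m -> tle (x m) (y m) -> lle x y.
Proof.
move=> Hx Hy Hxy Hm Htle n; case: (edge_tle (HF _) (Hxy (maxn n m))) => H.
  exact: thread_tle_down Hx Hy H (leq_maxl n m).
by case: Hm; exact: tle_anti Htle (thread_tle_down Hy Hx H (leq_maxr n m)).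
Qed.

Definition segment a b z := [/\ inlim alpha z, lle a z & lle z b].

Lemma segment_point a b n (y : rt_V (F n)) : inlim alpha a -> inlim alpha b -> lle a b ->
  tle (a n) y -> tle y (b n) -> exists z, segment a b z /\ z n = y.
Proof.
move=> Ha Hb Hab Hay Hyb.
have lift d : exists2 z : rt_V (F (d + n)),
    tle (a (d + n)) z /\ tle z (b (d + n)) & bond alpha d n z = y.
  elim: d => [|d [z [Hz1 Hz2] Hzy]]; first by exists y.
  have [||z' [H1 H2 Hz']] := @epi_lift_between _ _ _ (Hepi (d + n)) (HF _) (HF _)
    (a (d + n).+1) (b (d + n).+1) z (Hab _); rewrite ?Ha ?Hb //.
  by exists z' => //=; rewrite Hz'.
have [||u [Hu HP Hun]] := @konig_through _ alpha n (fun q => q = y)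
  (fun j (q : rt_V (F j)) => tle (a j) q /\ tle q (b j)) _ _ lift.
- by move=> j q [H1 H2]; rewrite -Ha -Hb; split; apply: (epi_tle (Hepi j)).
- by move=> j; exists (a j); split; [exact: tle_refl|exact: Hab].
by exists u; split => //; split => // j; case: (HP j).
Qed.

Lemma segment_connected a b : inlim alpha a -> inlim alpha b -> lle a b ->
  lconnected (segment a b).
Proof.
move=> Ha Hb Hab [A [B [Hcov [_ [[a0 Ha0] [[b0 Hb0] [HcA [HcB Hno]]]]]]]].
have segA z : A z -> segment a b z by move=> Hz; apply/Hcov; left.
have segB z : B z -> segment a b z by move=> Hz; apply/Hcov; right.
pose lifts (X : LV F -> Prop) n (q : rt_V (F n)) := exists2 z, X z & z n = q.
have lifts_alpha X n q : (forall z, X z -> segment a b z) ->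
    lifts X n.+1 q -> lifts X n (alpha n q).
  by move=> HX [z Hz <-]; exists z => //; case: (HX z Hz) => ->.
have crossing n : exists p : rt_V (F n) * rt_V (F n),
    [/\ rt_E (F n) p.1 p.2, lifts A n p.1 & lifts B n p.2].
  have in_seg z : segment a b z -> z n \in between (HF n) (a n) (b n).
    by case=> _ H1 H2; apply/in_between.
  have [|u [w [_ _ HuA HwB Huw]]] := @fconnected_crossing _ (HF n) _ (lifts A n) (lifts B n)
    (a0 n) (b0 n) (between_fconnected (Hab n)) _
    (in_seg _ (segA _ Ha0)) (ex_intro2 _ _ a0 Ha0 erefl)
    (in_seg _ (segB _ Hb0)) (ex_intro2 _ _ b0 Hb0 erefl).
    move=> q /(in_between (HF n)) [H1 H2].
    have [z [Hz Hzq]] := segment_point Ha Hb Hab H1 H2.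
    by case/Hcov: Hz => Hz; [left|right]; exists z.
  by exists (u, w).
pose G2 : nat -> finType := fun n => (rt_V (F n) * rt_V (F n))%type.
have [|u [Hu HP]] := @konig G2 (fun n p => (alpha n p.1, alpha n p.2))
  (fun n p => [/\ rt_E (F n) p.1 p.2, lifts A n p.1 & lifts B n p.2]) _ crossing.
  move=> n p [Hp HA HB]; split; first exact: (epi_edge (Hepi n)).
    exact: lifts_alpha segA HA.
  exact: lifts_alpha segB HB.
have closed_lift (X : LV F -> Prop) p : (forall z, X z -> segment a b z) ->
    relclosed (segment a b) X -> inlim alpha p -> (forall n, lifts X n (p n)) -> X p.
  move=> HX HcX Hp Hl; apply: HcX.
    by split => // n; have [z /HX[_ H1 H2] <-] := Hl n; [exact: H1|exact: H2].
  move=> n; have [z Hz Hzn] := Hl n; exists z; split => // m Hm.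
  by case: (HX z Hz) => Hzt _ _; exact: thread_eq_down Hzt Hp Hzn Hm.
apply: (Hno (fun n => (u n).1) (fun n => (u n).2)); last by move=> n; case: (HP n).
  apply: closed_lift segA HcA _ _; first by move=> n; rewrite -(Hu n).
  by move=> n; case: (HP n).
apply: closed_lift segB HcB _ _; first by move=> n; rewrite -(Hu n).
by move=> n; case: (HP n).
Qed.

Lemma relclosed_levelwise (Q : LV F -> Prop) (R : forall n, rt_V (F n) -> Prop) :
  relclosed Q (fun z => Q z /\ forall n, R n (z n)).
Proof.
by move=> z Hz Happ; split => // n; have [y [[_ Hy] e]] := Happ n; rewrite -(e n (leqnn n)).
Qed.

Lemma segment_arc a b : inlim alpha a -> inlim alpha b -> lle a b -> a <> b ->
  is_arc (segment a b).
Proof.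
move=> Ha Hb Hab Hne; split; first exact: segment_connected.
have Hsa : segment a b a by split => //; exact: lle_refl.
have Hsb : segment a b b by split => //; exact: lle_refl.
exists a, b; split => // x [Hx Hax Hxb] Hxa Hxb'; apply.
pose Q z := segment a b z /\ z <> x.
exists (fun z => Q z /\ lle z x), (fun z => Q z /\ lle x z).
split; [|split; [|split; [|split; [|split; [|split]]]]].
- move=> z; split => [[[Hz Hza Hzb] Hzx]|[[]|[]] //].
  by case: (lle_total Hz Hx Hzb Hxb) => H; [left|right].
- by move=> z [[[_ Hzx] H1] [_ H2]]; exact: Hzx (lle_anti H1 H2).
- by exists a; split => //; split => // e; exact: Hxa (esym e).
- by exists b; split => //; split => // e; exact: Hxb' (esym e).
- exact: relclosed_levelwise (fun n q => tle q (x n)).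
- exact: relclosed_levelwise (fun n q => tle (x n) q).
move=> y z [[[Hy _ _] Hyx] Hyle] [[[Hz _ _] Hzx] Hzle] Hyz.
have [n1 Hn1] := neq_level Hyx; have [n2 Hn2] := neq_level Hzx.
apply: (tle_between_nedge (HF _) (Hyle (maxn n1 n2)) (Hzle _) _ _ (Hyz _)).
  exact: thread_neq_up Hy Hx Hn1 (leq_maxl _ _).
by move=> e; apply: (thread_neq_up Hz Hx Hn2 (leq_maxr n1 n2)).
Qed.

Lemma order_ge2_between a v b : inlim alpha a -> inlim alpha v -> inlim alpha b ->
  lle a v -> lle v b -> a <> v -> v <> b -> order_ge alpha v 2.
Proof.
move=> Ha Hv Hb Hav Hvb Hnav Hnvb.
have meet z : segment a v z -> segment v b z -> z = v.
  by case=> _ _ H1 [_ H2 _]; exact: lle_anti H1 H2.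
exists (fun i => if i == 0 then segment a v else segment v b).
case=> [|[|//]] _ /=; split.
- by move=> z [].
- exact: segment_arc.
- by split => //; exact: lle_refl.
- by case=> [|[|//]] //= _ _ z; exact: meet.
- by move=> z [].
- exact: segment_arc.
- by split => //; exact: lle_refl.
- by case=> [|[|//]] //= _ _ z H1 H2; exact: meet.
Qed.

Section FraisseLimit.
Local Unset Implicit Arguments.
Variables (Fam : rtree -> Prop) (Fix : fixed_maps).
Local Set Implicit Arguments.
Hypothesis Fam_tree : forall T, Fam T -> is_rtree T.
Hypothesis Fix_epi : forall S T f, Fix S T f -> is_epi f.
Hypothesis Fix_id : forall T, Fam T -> Fix T T id.
Hypothesis Fix_comp : forall R S T (f : rt_V S -> rt_V T) (g : rt_V R -> rt_V S),
  Fix S T f -> Fix R S g -> Fix R T (f \o g).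
Hypothesis Fix_confluent : forall S T f, Fix S T f -> confluent f.
Hypothesis split_exists : forall T (a b c : rt_V T), Fam T -> a != b -> rt_E T a b ->
  tle a b -> (c = a \/ c = b) ->
  exists S (s : rt_V S -> rt_V T), [/\ Fam S, Fix S T s & is_split s a b c].
Hypothesis F_Fam : forall n, Fam (F n).
Hypothesis alpha_Fix : forall n, Fix (F n.+1) (F n) (alpha n).
Hypothesis lifting : forall A B (f : LV F -> rt_V A) (g : rt_V B -> rt_V A),
  admissible Fix alpha f -> Fix B A g ->
  exists h : LV F -> rt_V B, admissible Fix alpha h /\ forall x, inlim alpha x -> f x = g (h x).

Lemma admissible_proj m : admissible Fix alpha (fun z => z m).
Proof. by exists m, id; split => //; exact: Fix_id. Qed.

Lemma Fix_bond d k : Fix (F (d + k)) (F k) (bond alpha d k).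
Proof. by elim: d => [|d IH]; [exact: Fix_id|exact: Fix_comp IH (alpha_Fix (d + k))]. Qed.

(* Split the edge {v m, w m} with the new vertex over v m, and factor the
   projection to level m through the splitting map: v goes to the new vertex. *)
Lemma split_lift m v w : inlim alpha v -> inlim alpha w -> limE v w -> v m <> w m ->
  exists S k (g : rt_V (F k) -> rt_V S), [/\ is_rtree S, Fix (F k) S g,
    tle (g (v k)) (g (w k)) -> tle (v m) (w m), g (v k) != rt_root S &
    exists2 z, rt_E S (g (v k)) z & z \notin [:: g (v k); g (w k)]].
Proof.
move=> Hv Hw Hvw Hm.
have [S [s [a [b [HS Hs Hsplit Hwab]]]]] : exists S (s : rt_V S -> rt_V (F m)) (a b : rt_V (F m)),
    [/\ Fam S, Fix S (F m) s, is_split s a b (v m) & w m = a \/ w m = b].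
  have Hne : v m != w m by apply/eqP.
  case: (edge_tle (HF m) (Hvw m)) => Hle.
    have [S [s [HS Hs Hsp]]] := split_exists (F_Fam m) Hne (Hvw m) Hle (or_introl erefl).
    by exists S, s, (v m), (w m); split => //; right.
  have Hne' : w m != v m by rewrite eq_sym.
  have Hwv : rt_E (F m) (w m) (v m) by rewrite edge_sym.
  have [S [s [HS Hs Hsp]]] := split_exists (F_Fam m) Hne' Hwv Hle (or_intror erefl).
  by exists S, s, (w m), (v m); split => //; left.
have [h [[k [g [Hg Hh]]] Hfac]] := lifting (admissible_proj m) Hs.
have Hsg z : inlim alpha z -> s (g (z k)) = z m by move=> Hz; rewrite -Hh // -Hfac.
have [||Hroot Hnb] := split_new_vertex Hsplit (epi_edge (Fix_epi Hg) (Hvw k)) (Hsg v Hv).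
- by rewrite Hsg.
- by rewrite Hsg // => e; exact: Hm (esym e).
exists S, k, g; split => //; first exact: Fam_tree.
by move=> /(epi_tle (Fix_epi Hs)); rewrite !Hsg.
Qed.

Lemma edge_not_root m v w : inlim alpha v -> inlim alpha w -> limE v w -> v m <> w m ->
  v <> (fun n => rt_root (F n)).
Proof.
move=> Hv Hw Hvw Hm Hr.
have [S [k [g [_ Hg _ Hroot _]]]] := split_lift Hv Hw Hvw Hm.
by move: Hroot; rewrite Hr (epi_root (Fix_epi Hg)) eqxx.
Qed.

Lemma thread_above_edge m v w : inlim alpha v -> inlim alpha w -> limE v w ->
  v m <> w m -> tle (w m) (v m) -> exists u, [/\ inlim alpha u, lle v u & u <> v].
Proof.
move=> Hv Hw Hvw Hm Hwv.
have [S [k [g [HS Hg Hmono _ [z Hz Hznot]]]]] := split_lift Hv Hw Hvw Hm.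
have Hnle : ~ tle (g (v k)) (g (w k)).
  by move=> /Hmono Hvw'; exact: Hm (tle_anti (HF m) Hvw' Hwv).
have Hpar : g (w k) = par HS (g (v k)) := edge_nle_par HS (epi_edge (Fix_epi Hg) (Hvw k)) Hnle.
have Hzv : z <> g (v k) by move=> e; move: Hznot; rewrite e !inE eqxx.
have Hvz : tle (g (v k)) z.
  by case: (edge_tle_par HS Hz) => // Hzp; move: Hznot; rewrite Hzp -Hpar !inE eqxx orbT.
have [|||u [Hu Hvu Hgu]] := @konig_through _ alpha k (fun q => g q <> g (v k))
  (fun j q => tle (v j) q) _ _ _.
- by move=> j q H; rewrite -Hv; apply: (epi_tle (Hepi j)).
- by move=> j; exists (v j); exact: tle_refl.
- move=> d; pose gd := g \o bond alpha d k.
  have Hgd : Fix (F (d + k)) S gd := Fix_comp Hg (Fix_bond d k).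
  have Hgv : gd (v (d + k)) = g (v k) by rewrite /= (thread_bond (beta := alpha) d k Hv).
  have Hgw : gd (w (d + k)) = g (w k) by rewrite /= (thread_bond (beta := alpha) d k Hw).
  have Hnle' : ~ tle (v (d + k)) (w (d + k)) by move/(epi_tle (Fix_epi Hgd)); rewrite Hgv Hgw.
  have Hpar' : w (d + k) = par (HF _) (v (d + k)) := edge_nle_par (HF _) (Hvw _) Hnle'.
  have [||q [Hq Hqz]] := @confluent_lift_above _ _ gd (HF _) HS (v (d + k)) z
    (Fix_confluent Hgd); first by rewrite -Hpar' Hgv Hgw.
    by rewrite Hgv.
  by exists q => //; change (gd q <> g (v k)); rewrite Hqz.
by exists u; split => // e; apply: Hgu; rewrite e.
Qed.

Lemma edge_order_ge2 v w : inlim alpha v -> inlim alpha w -> w <> v -> limE v w ->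
  order_ge alpha v 2.
Proof.
move=> Hv Hw Hwv Hvw.
have [m Hm] := neq_level (fun e => Hwv (esym e)).
case: (edge_tle (HF m) (Hvw m)) => Hle.
  have Hr : inlim alpha (fun n => rt_root (F n)) by move=> n; exact: epi_root (Hepi n).
  apply: (order_ge2_between Hr Hv Hw) => //.
  - by move=> n; exact: tle_root.
  - exact: edge_lle Hv Hw Hvw Hm Hle.
  - by move=> e; exact: edge_not_root Hv Hw Hvw Hm (esym e).
  - by move=> e; exact: Hwv (esym e).
have Hwv' : limE w v by move=> n; rewrite edge_sym.
have [u [Hu Hvu Huv]] := thread_above_edge Hv Hw Hvw Hm Hle.
apply: (order_ge2_between Hw Hv Hu) => //.
- exact: edge_lle Hw Hv Hwv' (fun e => Hm (esym e)) Hle.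
- by move=> e; exact: Huv (esym e).
Qed.

End FraisseLimit.

End InverseLimit.

Theorem theorem7p7 (Fam : rtree -> Prop) (Fix : fixed_maps)
  (F : nat -> rtree) (alpha : forall n, rt_V (F n.+1) -> rt_V (F n)) :
  proj_fraisse_family Fam Fix ->
  (forall S T f, Fix S T f -> confluent f) ->
  (forall S T (s : rt_V S -> rt_V T) a b c,
      Fam S -> Fam T -> is_split s a b c -> Fix S T s) ->
  (forall T (a b c : rt_V T), Fam T -> a != b -> rt_E T a b -> tle a b ->
      (c = a \/ c = b) ->
      exists S (s : rt_V S -> rt_V T), [/\ Fam S, Fix S T s & is_split s a b c]) ->
  is_proj_fraisse_limit Fam Fix alpha ->
  forall v : LV F, ~ isolated_end_vertex alpha v.
Proof.
move=> [Fam_tree [Fix_Fam_epi [_ [Fix_id [Fix_comp _]]]]] Fix_confluent _ split_exists.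
move=> [F_Fam alpha_Fix _ lifting] v [[Hv _ Hnot2] [w [Hw Hwv Hvw]]].
have Fix_epi S T f : Fix S T f -> is_epi f by case/Fix_Fam_epi.
have HF n : is_rtree (F n) := Fam_tree _ (F_Fam n).
have Hepi n : is_epi (alpha n) := Fix_epi _ _ _ (alpha_Fix n).
exact: Hnot2 (edge_order_ge2 HF Hepi Fam_tree Fix_epi Fix_id Fix_comp Fix_confluent
  split_exists F_Fam alpha_Fix lifting Hv Hw Hwv Hvw).
Qed.
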